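(* Let $c\ge 0$ be a budget. Consider the primal problem $$\max_{w,\lambda_2,\mu}\ \lambda_2\quad\text{s.t.}\quad \sum_{\{i,j\}\in E_3}w_{ij}L_{ij}+L_0+\mu\boldsymbol e\boldsymbol e^T-\lambda_2 I\succeq 0,\ \ \sum_{\{i,j\}\in E_3}w_{ij}=c,\ \ w_{ij}\ge 0,$$ and the dual problem $$\max_{\xi\in\mathbb{R},\,X\in\mathbb{R}^{n\times n}}\ c\xi-\langle X,L_0\rangle\quad\text{s.t.}\quad \langle X,I\rangle=1,\ \ \langle X,\boldsymbol e\boldsymbol e^T\rangle=0,\ \ \langle X,L_{ij}\rangle\le-\xi\ \ \forall\{i,j\}\in E_3,\ \ X\succeq 0.$$ Then strong duality holds (the two optimal values are equal and finite), and the dual problem attains its optimal value.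
   Context: A multiplex network consists of two layers $G_1=(V_1,E_1)$ and $G_2=(V_2,E_2)$, simple undirected graphs with $|V_1|=|V_2|=N$; the vertices of $G_1$ are numbered $1,\dots,N$ and those of $G_2$ are numbered $N+1,\dots,2N$, and $n=2N$. The interlayer edges form the perfect matching $E_3=\{\{i,N+i\}:i=1,\dots,N\}$, carrying nonnegative weights $w_{ij}$. For an edge $\{i,j\}$ let $L_{ij}=(\delta_i-\delta_j)(\delta_i-\delta_j)^T$, $\delta_i$ the $i$-th standard basis vector of $\mathbb{R}^n$. $L_0=\sum_{\{i,j\}\in E_1\cup E_2}L_{ij}$. $\boldsymbol e$ is the all-ones vector in $\mathbb{R}^n$, $\langle A,B\rangle=\operatorname{Tr}(A^TB)$. *)

From HB Require Import structures.
From mathcomp Require Import all_boot all_order all_algebra.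
From mathcomp Require Import reals.
Set Implicit Arguments. Unset Strict Implicit. Unset Printing Implicit Defensive.
Import Order.TTheory GRing.Theory Num.Theory.
Local Open Scope ring_scope.

Definition psd (R : realType) (n : nat) (A : 'M[R]_n) : Prop :=
  A^T = A /\ forall v : 'cV[R]_n, 0 <= (v^T *m A *m v) 0 0.

Definition frob (R : realType) (n : nat) (A B : 'M[R]_n) : R := \tr (A^T *m B).

Definition Ledge (R : realType) (n : nat) (i j : 'I_n) : 'M[R]_n :=
  \matrix_(k, l) (((k == i)%:R - (k == j)%:R) * ((l == i)%:R - (l == j)%:R)).

Definition eeT (R : realType) (n : nat) : 'M[R]_n := const_mx 1.

(* Layer 1 vertex i (i < N) is lshift N i (number i+1 in the paper);
   layer 2 vertex i is rshift N i (number N+i+1 in the paper).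
   Edge sets of the layers are given as symmetric irreflexive relations on 'I_N. *)
Definition simple_graph (N : nat) (e : rel 'I_N) : Prop :=
  (forall i, ~~ e i i) /\ (forall i j, e i j = e j i).

(* L_0 = sum over {i,j} in E_1 u E_2 of L_ij (each unordered edge once: i < j). *)
Definition L0 (R : realType) (N : nat) (e1 e2 : rel 'I_N) : 'M[R]_(N + N) :=
  \sum_(i : 'I_N) \sum_(j : 'I_N | (i < j)%N && e1 i j)
      Ledge R (lshift N i) (lshift N j)
  + \sum_(i : 'I_N) \sum_(j : 'I_N | (i < j)%N && e2 i j)
      Ledge R (rshift N i) (rshift N j).

(* sum_{ {i,N+i} in E_3 } w_i L_{i,N+i} *)
Definition Linter (R : realType) (N : nat) (w : 'I_N -> R) : 'M[R]_(N + N) :=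
  \sum_(i : 'I_N) w i *: Ledge R (lshift N i) (rshift N i).

Definition primal_feasible (R : realType) (N : nat) (e1 e2 : rel 'I_N) (c : R)
    (w : 'I_N -> R) (lam2 mu : R) : Prop :=
  psd (Linter w + L0 R e1 e2 + mu *: eeT R (N + N) - lam2%:M)
  /\ \sum_(i : 'I_N) w i = c
  /\ (forall i, 0 <= w i).

Definition dual_feasible (R : realType) (N : nat)
    (xi : R) (X : 'M[R]_(N + N)) : Prop :=
  frob X 1%:M = 1
  /\ frob X (eeT R (N + N)) = 0
  /\ (forall i : 'I_N, frob X (Ledge R (lshift N i) (rshift N i)) <= - xi)
  /\ psd X.

(* Let D = {X psd : tr X = 1, <X, ee^T> = 0} (compact and convex) and
   phi X = <X, L0> + c max_i <X, L_{i,N+i}>.  Then p = min_D phi is the common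
   optimal value and any minimizer Xs, with xi = - max_i <Xs, L_{i,N+i}>, is
   dual optimal.  Weak duality is <Xs, P> >= 0 for the primal slack matrix P:
   the Frobenius product of two psd matrices is nonnegative because a psd
   matrix is a sum of rank-one matrices u u^T.  Conversely, for p' < p the
   affine functions g_i X = <X, L0 + c L_{i,N+i}> are never all <= p' on D;
   minimizing the penalty sum_i max(0, g_i - p')^2 over D gives convex
   weights w with p' <= sum_i w_i g_i on D (a minimax step).  On the rank-one
   points u u^T / |u|^2 with u orthogonal to e this is a Rayleigh-quotient
   bound, which makes (c w, p', |p'|) primal feasible. *)

From HB Require Import structures.
From mathcomp Require Import all_boot all_order all_algebra.
From mathcomp Require Import all_classical all_reals all_analysis.
From mathcomp Require Import ring lra.
Set Implicit Arguments. Unset Strict Implicit. Unset Printing Implicit Defensive.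
Import Order.TTheory GRing.Theory Num.Theory.
Import numFieldNormedType.Exports.
Local Open Scope classical_set_scope.
Local Open Scope ring_scope.

Section QuadraticForms.
Variables (R : realType) (n : nat).
Implicit Types (A X : 'M[R]_n) (u v w : 'cV[R]_n).

Fact frob_is_semilinear X : semilinear (frob X : 'M[R]_n -> R^o).
Proof. by split=> [a A|A B]; rewrite /frob ?(mulmxDr, mxtraceD) // -scalemxAr mxtraceZ. Qed.

HB.instance Definition _ X :=
  GRing.isSemilinear.Build R 'M[R]_n R^o _ (frob X : 'M[R]_n -> R^o)
    (frob_is_semilinear X).

Lemma frobDr X A B : frob X (A + B) = frob X A + frob X B.
Proof. exact: linearD. Qed.

Lemma frobZr X a A : frob X (a *: A) = a * frob X A.
Proof. exact: linearZ. Qed.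

Lemma frobC X A : frob X A = frob A X.
Proof. by rewrite /frob -mxtrace_tr trmx_mul trmxK. Qed.

Definition bform A u v : R := (u^T *m A *m v) 0 0.

Lemma bformDl A u1 u2 v : bform A (u1 + u2) v = bform A u1 v + bform A u2 v.
Proof. by rewrite /bform linearD !mulmxDl mxE. Qed.

Lemma bformZl A a u v : bform A (a *: u) v = a * bform A u v.
Proof. by rewrite /bform linearZ -!scalemxAl mxE. Qed.

Lemma bformDr A u v1 v2 : bform A u (v1 + v2) = bform A u v1 + bform A u v2.
Proof. by rewrite /bform mulmxDr mxE. Qed.

Lemma bformZr A a u v : bform A u (a *: v) = a * bform A u v.
Proof. by rewrite /bform -scalemxAr mxE. Qed.

Lemma bform_sym A u v : A^T = A -> bform A v u = bform A u v.
Proof.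
move=> sA; rewrite /bform -[in LHS](trmxK (v^T *m A *m u)) mxE.
by rewrite !trmx_mul trmxK sA mulmxA.
Qed.

Lemma bform_delta A i j : bform A (delta_mx i 0) (delta_mx j 0) = A i j.
Proof. by rewrite /bform trmx_delta -rowE -colE !mxE. Qed.

Lemma bformDA A B u v : bform (A + B) u v = bform A u v + bform B u v.
Proof. by rewrite /bform mulmxDr mulmxDl mxE. Qed.

Lemma bformZA a A u v : bform (a *: A) u v = a * bform A u v.
Proof. by rewrite /bform -scalemxAr -scalemxAl mxE. Qed.

Lemma bformBA A B u v : bform (A - B) u v = bform A u v - bform B u v.
Proof. by rewrite -scaleN1r bformDA bformZA mulN1r. Qed.

Lemma dot_sym u v : (u^T *m v) 0 0 = (v^T *m u) 0 0.
Proof. by rewrite -[in LHS](trmxK (u^T *m v)) mxE trmx_mul trmxK. Qed.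

Lemma bform_outer_sqr u w : bform (u *m u^T) w w = (u^T *m w) 0 0 ^+ 2.
Proof. by rewrite /bform mulmxA -mulmxA [LHS]mxE big_ord1 expr2 dot_sym. Qed.

Lemma frob_outer X u v : frob X (u *m v^T) = bform X u v.
Proof.
rewrite /frob mulmxA mxtrace_mulC /mxtrace big_ord1 mulmxA /bform.
by rewrite -[in LHS](trmxK (v^T *m X^T *m u)) mxE !trmx_mul !trmxK mulmxA.
Qed.

Lemma frob_delta X i j : frob X (delta_mx i j) = X i j.
Proof.
have -> : delta_mx i j = delta_mx i 0 *m (delta_mx j 0 : 'cV[R]_n)^T.
  by rewrite trmx_delta mul_delta_mx.
by rewrite frob_outer bform_delta.
Qed.

Lemma bform_sym_expand A u w t : A^T = A ->
  bform A (u + t *: w) (u + t *: w) =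
  bform A u u + 2 * t * bform A u w + t ^+ 2 * bform A w w.
Proof.
move=> sA; rewrite !(bformDl, bformDr, bformZl, bformZr) (bform_sym _ _ sA); ring.
Qed.

Lemma bform_delta2 A a b i j : A^T = A ->
  bform A (a *: delta_mx i 0 + b *: delta_mx j 0) (a *: delta_mx i 0 + b *: delta_mx j 0)
  = a ^+ 2 * A i i + 2 * a * b * A i j + b ^+ 2 * A j j.
Proof. by move=> sA; rewrite bform_sym_expand // !(bformZl, bformZr) !bform_delta; ring. Qed.

Lemma psd_diag A i : psd A -> 0 <= A i i.
Proof. by move=> [_ /(_ (delta_mx i 0))]; rewrite -/(bform _ _ _) bform_delta. Qed.

Lemma psd_diag0_row A i j : psd A -> A i i = 0 -> A i j = 0.
Proof.
move=> psdA Aii0; have [sA qA] := psdA; have Ajj := psd_diag j psdA.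
(* the form at  -(A j j + 1) e_i + (A i j) e_j  equals  -(A i j)^2 (A j j + 2) *)
have := qA (- (A j j + 1) *: delta_mx i 0 + A i j *: delta_mx j 0).
rewrite -/(bform _ _ _) bform_delta2 // Aii0 => q_ge0.
by apply/eqP; rewrite -sqrf_eq0 eq_le sqr_ge0 andbT; nra.
Qed.

Definition diag_support A : {set 'I_n} := [set k | A k k != 0].

Lemma psd_peel A i : psd A -> A i i != 0 ->
  exists2 u : 'cV[R]_n,
    psd (A - u *m u^T) & diag_support (A - u *m u^T) \proper diag_support A.
Proof.
move=> psdA Aii_neq0; have [sA qA] := psdA.
set a := A i i; have a_gt0 : 0 < a by rewrite lt0r Aii_neq0 psd_diag.
set c := col i A; pose A' := A - a^-1 *: (c *m c^T).
have A'E k l : A' k l = A k l - a^-1 * (A k i * A l i) by rewrite !mxE big_ord1 !mxE.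
have psdA' : psd A'.
  split=> [|v]; first by rewrite linearB /= linearZ /= trmx_mul trmxK sA.
  rewrite -/(bform _ _ _); set s := bform A (delta_mx i 0) v.
  have -> : bform A' v v = bform A v v - a^-1 * s ^+ 2.
    by rewrite bformBA bformZA bform_outer_sqr /c colE trmx_mul sA.
  (* completing the square in the direction e_i *)
  have := qA (v + (- (s / a)) *: delta_mx i 0).
  rewrite -/(bform _ _ _) bform_sym_expand // bform_delta (bform_sym _ _ sA) -/a -/s.
  by move=> h; congr (0 <= _): h; field; rewrite gt_eqF.
have uuE : (Num.sqrt a)^-1 *: c *m ((Num.sqrt a)^-1 *: c)^T = a^-1 *: (c *m c^T).
  by rewrite linearZ -scalemxAl -scalemxAr scalerA -invfM -expr2 sqr_sqrtr ?ltW.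
exists ((Num.sqrt a)^-1 *: c); rewrite uuE -/A' //.
apply/properP; split.
  apply/fintype.subsetP => k; rewrite !inE A'E; apply: contraNN => /eqP Akk0.
  by rewrite Akk0 psd_diag0_row // mul0r mulr0 subr0.
by exists i; rewrite !inE // A'E -/a negbK; apply/eqP; field; rewrite gt_eqF.
Qed.

Lemma psd_sum_outer A : psd A -> exists s : seq 'cV[R]_n, A = \sum_(u <- s) u *m u^T.
Proof.
move: {2}#|diag_support A| (leqnn #|diag_support A|) => m.
elim: m A => [|m IHm] A supp_le psdA.
  have -> : A = 0.
    apply/matrixP => k l; rewrite mxE psd_diag0_row //; apply/eqP.
    apply: contraTT supp_le => Akk; rewrite -ltnNge card_gt0.
    by apply/set0Pn; exists k; rewrite inE.
  by exists [::]; rewrite big_nil.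
have [supp0|[i]] := set_0Vmem (diag_support A).
  by apply: IHm; rewrite // supp0 cards0.
rewrite inE => /(psd_peel psdA)[u psdA' proper_supp].
have [|s Es] := IHm _ _ psdA'.
  by rewrite -ltnS (leq_trans (proper_card proper_supp)).
by exists (u :: s); rewrite big_cons -Es addrC subrK.
Qed.

Lemma frob_psd_ge0 X A : psd X -> psd A -> 0 <= frob X A.
Proof.
move=> [_ qX] /psd_sum_outer[s ->]; rewrite linear_sum /=.
by apply: sumr_ge0 => u _; rewrite frob_outer; exact: qX.
Qed.

Lemma bform1 u v : bform 1%:M u v = (u^T *m v) 0 0.
Proof. by rewrite /bform mulmx1. Qed.

Lemma bform_scalar a u v : bform a%:M u v = a * (u^T *m v) 0 0.
Proof. by rewrite -scalemx1 bformZA bform1. Qed.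

End QuadraticForms.

Section Laplacian.
Variables (R : realType) (n : nat).
Implicit Types (B : 'M[R]_n) (u v w : 'cV[R]_n) (i j : 'I_n).

Local Notation ones := (const_mx 1 : 'cV[R]_n).

Lemma eeT_outer : eeT R n = ones *m ones^T.
Proof. by apply/matrixP => i j; rewrite !mxE big_ord1 !mxE mulr1. Qed.

Lemma ones_dot u : (ones^T *m u) 0 0 = \sum_k u k 0.
Proof. by rewrite mxE; apply: eq_bigr => k _; rewrite !mxE mul1r. Qed.

Lemma Ledge_outer i j (d := delta_mx i 0 - delta_mx j 0 : 'cV[R]_n) :
  Ledge R i j = d *m d^T.
Proof. by apply/matrixP => k l; rewrite !mxE big_ord1 !mxE !andbT. Qed.

Definition laplacian_like B := B^T = B /\ B *m ones = 0.

Lemma laplacian_likeD B1 B2 :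
  laplacian_like B1 -> laplacian_like B2 -> laplacian_like (B1 + B2).
Proof.
by move=> [s1 z1] [s2 z2]; split; rewrite (linearD, mulmxDl) /= ?s1 ?s2 ?z1 ?z2 ?addr0.
Qed.

Lemma laplacian_likeZ a B : laplacian_like B -> laplacian_like (a *: B).
Proof. by move=> [sB zB]; split; rewrite ?linearZ /= ?sB // -scalemxAl zB scaler0. Qed.

Lemma laplacian_like_sum (I : Type) (r : seq I) (P : pred I) (F : I -> 'M[R]_n) :
  (forall x, P x -> laplacian_like (F x)) -> laplacian_like (\sum_(x <- r | P x) F x).
Proof.
move=> lapF; elim/big_ind: _ => //; last exact: laplacian_likeD.
by split; rewrite ?trmx0 ?mul0mx.
Qed.

Lemma laplacian_like_Ledge i j : laplacian_like (Ledge R i j).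
Proof.
rewrite Ledge_outer; split; first by rewrite trmx_mul trmxK.
rewrite -mulmxA linearB /= !trmx_delta [_ *m ones]mulmxBl -!rowE.
by apply/matrixP => k l; rewrite [in LHS]mxE big_ord1 !mxE subrr mulr0.
Qed.

(* Split v = w + a e with w orthogonal to e: the form is
   (w' B w - p w'w) + a^2 n (mu n - p). *)
Lemma psd_laplacian_shift B p mu : (0 < n)%N -> laplacian_like B ->
  p <= mu * n%:R ->
  (forall w, (ones^T *m w) 0 0 = 0 -> p * (w^T *m w) 0 0 <= bform B w w) ->
  psd (B + mu *: eeT R n - p%:M).
Proof.
move=> n_gt0 [sB zB] p_le Bw; split.
  by rewrite linearB linearD /= linearZ /= sB tr_scalar_mx eeT_outer trmx_mul trmxK.
move=> v; rewrite -/(bform _ _ _) bformBA bformDA bformZA bform_scalar.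
have n_gt0R : 0 < n%:R :> R by rewrite ltr0n.
have ones_n : (ones^T *m ones) 0 0 = n%:R.
  by rewrite ones_dot (eq_bigr (fun=> 1)) ?sumr_const ?card_ord // => k _; rewrite mxE.
set a := (ones^T *m v) 0 0 / n%:R; set w := v - a *: ones.
have ones_v : (ones^T *m v) 0 0 = a * n%:R by rewrite divfK // gt_eqF.
have entryE (X Y : 'M[R]_1) b : (X - b *: Y) 0 0 = X 0 0 - b * Y 0 0 by rewrite !mxE.
have ones_w : (ones^T *m w) 0 0 = 0 by rewrite mulmxBr -scalemxAr entryE ones_n ones_v subrr.
have vE : v = w + a *: ones by rewrite subrK.
have Bv : bform B v v = bform B w w.
  have Bones x : bform B x ones = 0 by rewrite /bform -mulmxA zB mulmx0 mxE.
  by rewrite vE bform_sym_expand // !Bones !mulr0 !addr0.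
have Iv : (v^T *m v) 0 0 = (w^T *m w) 0 0 + a ^+ 2 * n%:R.
  rewrite -bform1 vE bform_sym_expand ?tr_scalar_mx // !bform1 ones_n.
  by rewrite (dot_sym w) ones_w mulr0 addr0.
rewrite Bv eeT_outer bform_outer_sqr ones_v Iv.
have := Bw w ones_w; have : 0 <= a ^+ 2 * n%:R * (mu * n%:R - p).
  by rewrite mulr_ge0 ?subr_ge0 // mulr_ge0 ?sqr_ge0 // ltW.
nra.
Qed.

End Laplacian.

Section DualDomain.
Variables (R : realType) (n : nat).
Implicit Types (A B X Y : 'M[R]_n) (u v : 'cV[R]_n) (i j : 'I_n).

Local Notation ones := (const_mx 1 : 'cV[R]_n).

Definition dual_domain X := frob X 1%:M = 1 /\ frob X (eeT R n) = 0 /\ psd X.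

Lemma frobZl (a : R) X A : frob (a *: X) A = a * frob X A.
Proof. by rewrite frobC linearZ frobC. Qed.

Lemma frob_outer_sqr X u : frob (u *m u^T) X = bform X u u.
Proof. by rewrite frobC frob_outer. Qed.

Lemma frob_segment X Y t A :
  frob (X + t *: (Y - X)) A = frob X A + t * (frob Y A - frob X A).
Proof. by rewrite frobC linearD linearZ linearB /= !(frobC A). Qed.

Lemma dual_domain_convex X Y t : dual_domain X -> dual_domain Y -> 0 <= t <= 1 ->
  dual_domain (X + t *: (Y - X)).
Proof.
move=> [X1 [Xe [sX qX]]] [Y1 [Ye [sY qY]]] /andP[t_ge0 t_le1].
rewrite /dual_domain !frob_segment X1 Y1 Xe Ye !subrr !mulr0 !addr0; do 2!split => //.
split=> [|v]; first by rewrite linearD /= linearZ /= linearB /= sX sY.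
rewrite -/(bform _ _ _) bformDA bformZA bformBA.
have := qX v; have := qY v; rewrite -!/(bform _ _ _) => qYv qXv.
rewrite (_ : _ + _ = (1 - t) * bform X v v + t * bform Y v v); last by ring.
by rewrite addr_ge0 ?mulr_ge0 ?subr_ge0.
Qed.

Lemma dual_domain_rank1 u : (ones^T *m u) 0 0 = 0 -> 0 < (u^T *m u) 0 0 ->
  dual_domain (((u^T *m u) 0 0)^-1 *: (u *m u^T)).
Proof.
move=> ones_u u_gt0; rewrite /dual_domain !frobZl !frob_outer_sqr.
rewrite bform1 mulVf ?gt_eqF // eeT_outer bform_outer_sqr ones_u.
rewrite expr0n mulr0; do 2!split => //.
split=> [|v]; first by rewrite linearZ /= trmx_mul trmxK.
by rewrite -/(bform _ _ _) bformZA bform_outer_sqr mulr_ge0 ?sqr_ge0 // invr_ge0 ltW.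
Qed.

Lemma dual_domain_Ledge i j : i != j -> dual_domain (2^-1 *: Ledge R i j).
Proof.
move=> ij; set d : 'cV[R]_n := delta_mx i 0 - delta_mx j 0.
have dd : (d^T *m d) 0 0 = 2.
  have dE : d = 1 *: delta_mx i 0 + (-1) *: delta_mx j 0 by rewrite scale1r scaleN1r.
  rewrite -bform1 dE bform_delta2 ?tr_scalar_mx // !mxE !eqxx (negPf ij).
  by rewrite expr1n sqrrN expr1n !mulr1 mulr0 addr0.
rewrite Ledge_outer -/d -dd; apply: dual_domain_rank1; last by rewrite dd.
by rewrite /d mulmxBr -!colE !mxE subrr.
Qed.

Lemma dual_domain_entry X i j : dual_domain X -> `|X i j| <= 1.
Proof.
move=> [X1 [_ psdX]]; have [sX qX] := psdX.
have diag_le1 k : X k k <= 1.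
  move: X1; rewrite /frob mulmx1 mxtrace_tr /mxtrace (bigD1 k) //= => <-.
  by rewrite lerDl sumr_ge0 // => l _; exact: psd_diag.
have form_ge0 b : 0 <= X i i + 2 * b * X i j + b ^+ 2 * X j j.
  have := qX (1 *: delta_mx i 0 + b *: delta_mx j 0).
  by rewrite -/(bform _ _ _) bform_delta2 // expr1n mulr1 !mul1r.
have := form_ge0 1; have := form_ge0 (-1); rewrite sqrrN expr1n !mul1r mulr1.
have := diag_le1 i; have := diag_le1 j; rewrite ler_norml.
by move=> *; apply/andP; split; lra.
Qed.

Lemma rayleigh_lower_bound B p : (forall X, dual_domain X -> p <= frob X B) ->
  forall u, (ones^T *m u) 0 0 = 0 -> p * (u^T *m u) 0 0 <= bform B u u.
Proof.
move=> pB u ones_u.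
have uu_sum : (u^T *m u) 0 0 = \sum_k u k 0 ^+ 2.
  by rewrite mxE; apply: eq_bigr => k _; rewrite mxE expr2.
have : 0 <= (u^T *m u) 0 0 by rewrite uu_sum sumr_ge0 // => k _; exact: sqr_ge0.
rewrite le0r => /orP[/eqP uu0|uu_gt0].
  have -> : u = 0.
    apply/matrixP => k l; rewrite (ord1 l) !mxE; apply/eqP; rewrite -sqrf_eq0; apply/eqP.
    by move: uu0; rewrite uu_sum => /psumr_eq0P -> // m _; exact: sqr_ge0.
  by rewrite /bform !mulmx0 !mxE mulr0.
have := pB _ (dual_domain_rank1 ones_u uu_gt0).
by rewrite frobZl frob_outer_sqr ler_pdivlMl // mulrC.
Qed.

End DualDomain.

Section Continuity.
Variables (R : realType) (T : topologicalType).

Lemma sum_continuous (I : Type) (r : seq I) (f : I -> T -> R) :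
  (forall i, continuous (f i)) -> continuous (fun x => \sum_(i <- r) f i x).
Proof.
move=> fc; elim: r => [|i r IHr] x.
  by under eq_fun do rewrite big_nil; exact: cst_continuous.
under eq_fun do rewrite big_cons.
exact: (@continuousD _ R^o _ _ _ _ (fc i x) (IHr x)).
Qed.

Lemma bigmax_continuous (I : Type) (r : seq I) (x0 : R) (f : I -> T -> R) :
  (forall i, continuous (f i)) -> continuous (fun x => \big[Num.max/x0]_(i <- r) f i x).
Proof.
move=> fc; elim: r => [|i r IHr] x.
  by under eq_fun do rewrite big_nil; exact: cst_continuous.
under eq_fun do rewrite big_cons.
exact: (continuous_max (fc i x) (IHr x)).
Qed.

End Continuity.

Section VecDualDomain.
Variables (R : realType) (n : nat).
Implicit Types (X C : 'M[R]_n) (v : 'rV[R]_(n * n)).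

Lemma frob_vec_mx_continuous C : continuous (fun v => frob (vec_mx v) C).
Proof.
have -> : (fun v => frob (vec_mx v) C) =
          (fun v => \sum_i \sum_j C j i * v 0 (mxvec_index j i)).
  apply/funext => v; rewrite frobC /frob /mxtrace; apply: eq_bigr => i _.
  by rewrite mxE; apply: eq_bigr => j _; rewrite !mxE.
apply: sum_continuous => i; apply: sum_continuous => j v.
apply: (@continuousM _ _ (fun=> C j i) (fun v => v 0 (mxvec_index j i))).
  exact: cst_continuous.
exact: coord_continuous.
Qed.

Lemma closed_frob_vec_mx (K : Type) (C : K -> 'M[R]_n) (S : set R) :
  closed S -> closed [set v | forall k, S (frob (vec_mx v) (C k))].
Proof.
move=> S_closed.
have -> : [set v | forall k, S (frob (vec_mx v) (C k))] =
          \bigcap_(k in setT) ((fun v => frob (vec_mx v) (C k)) @^-1` S).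
  by apply/seteqP; split=> [v vS k _|v vS k]; [exact: vS | exact: vS k I].
apply: closed_bigI => k _; apply: preimage_closed S_closed => v _.
exact: frob_vec_mx_continuous.
Qed.

(* Compactness is proved in row-vector coordinates, where rV_compact applies. *)
Definition vec_dual_domain : set 'rV[R]_(n * n) :=
  [set v | dual_domain (vec_mx v : 'M[R]_n)].

Lemma vec_mx_segment v v' t :
  vec_mx (v + t *: (v' - v)) = vec_mx v + t *: (vec_mx v' - vec_mx v) :> 'M[R]_n.
Proof. by rewrite linearD linearZ linearB. Qed.

Lemma vec_dual_domain_convex v v' t :
  vec_dual_domain v -> vec_dual_domain v' -> 0 <= t <= 1 ->
  vec_dual_domain (v + t *: (v' - v)).
Proof. by rewrite /vec_dual_domain /= vec_mx_segment; exact: dual_domain_convex. Qed.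

Lemma vec_dual_domain_closed : closed vec_dual_domain.
Proof.
pose sym_defect (ij : 'I_n * 'I_n) := delta_mx ij.1 ij.2 - delta_mx ij.2 ij.1 : 'M[R]_n.
have -> : vec_dual_domain =
  [set v | forall k : unit, [set 1] (frob (vec_mx v) 1%:M)] `&`
  [set v | forall k : unit, [set 0] (frob (vec_mx v) (eeT R n))] `&`
  [set v | forall ij, [set 0] (frob (vec_mx v) (sym_defect ij))] `&`
  [set v | forall u : 'cV[R]_n, [set x | 0 <= x] (frob (vec_mx v) (u *m u^T))].
  apply/seteqP; split=> v /=.
    move=> [X1 [Xe [sX qX]]]; split; [split; [split|]|] => // [[i j]|u].
      by rewrite /sym_defect linearB /= !frob_delta -{1}sX mxE subrr.
    by rewrite frob_outer; exact: qX.
  move=> [[[X1 Xe] sX] qX]; split; first exact: X1 tt.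
  split; first exact: Xe tt.
  split=> [|u]; last first.
    by rewrite -/(bform _ _ _) -frob_outer; exact: qX.
  apply/matrixP => i j; apply/eqP; rewrite mxE -subr_eq0.
  by have := sX (j, i); rewrite /sym_defect linearB /= !frob_delta => ->.
do 3?apply: closedI; apply: closed_frob_vec_mx;
  [exact: closed_eq | exact: closed_eq | exact: closed_eq | exact: closed_ge].
Qed.

Lemma vec_dual_domain_compact : compact vec_dual_domain.
Proof.
have box_compact :=
  @rV_compact R (n * n) (fun=> `[-1, 1]%classic) (fun=> @segment_compact R (-1) 1).
apply: (subclosed_compact vec_dual_domain_closed box_compact) => v vD k.
case/mxvec_indexP: k => i j.
by have := dual_domain_entry i j vD; rewrite mxE ler_norml /= in_itv.
Qed.

Lemma dual_domain_argmin (phi : 'M[R]_n -> R) :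
  continuous (phi \o vec_mx) -> (exists X, dual_domain X) ->
  exists2 X, dual_domain X & forall Y, dual_domain Y -> phi X <= phi Y.
Proof.
move=> phi_cont [X0 X0D].
have [|v vD v_min] :=
  compact_EVT_min _ vec_dual_domain_compact (continuous_subspaceT phi_cont).
  by exists (mxvec X0); rewrite /vec_dual_domain /= mxvecK.
exists (vec_mx v); first by rewrite inE in vD.
move=> Y YD; have := v_min (mxvec Y); rewrite /= mxvecK; apply.
by rewrite inE /vec_dual_domain /= mxvecK.
Qed.

End VecDualDomain.

Lemma maxr0_sqrD (R : realDomainType) (a b : R) :
  Num.max 0 (a + b) ^+ 2 <= Num.max 0 a ^+ 2 + 2 * Num.max 0 a * b + b ^+ 2.
Proof. by case: (leP 0 (a + b)) => ?; case: (leP 0 a) => ?; nra. Qed.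

Section Minimax.
Variables (R : realType) (V : normedModType R) (I : finType).
Variables (D : set V) (g : I -> V -> R) (p : R).
Hypothesis D_compact : compact D.
Hypothesis D_convex : forall x y t, D x -> D y -> 0 <= t <= 1 -> D (x + t *: (y - x)).
Hypothesis g_affine : forall i x y t, g i (x + t *: (y - x)) = g i x + t * (g i y - g i x).
Hypothesis g_cont : forall i, continuous (g i).

(* The weights are the positive parts of g_i - p at a minimizer of the penalty. *)
Let excess i x := Num.max 0 (g i x - p).
Let penalty x := \sum_i excess i x ^+ 2.

Lemma penalty_continuous : continuous penalty.
Proof.
apply: sum_continuous => i.
have excess_cont : continuous (excess i).
  move=> y; apply: (@continuous_max R _ (fun=> 0) (fun x => g i x - p)).
    exact: cst_continuous.
  by apply: cvgB; [exact: g_cont | exact: cvg_cst].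
have -> : (fun x => excess i x ^+ 2) = excess i \* excess i.
  by apply/funext => x; rewrite /= expr2.
by move=> x; apply: cvgM; exact: excess_cont.
Qed.

Lemma penalty_segment x y t : penalty (x + t *: (y - x)) <=
  penalty x + 2 * t * \sum_i excess i x * (g i y - g i x)
            + t ^+ 2 * \sum_i (g i y - g i x) ^+ 2.
Proof.
rewrite /penalty !mulr_sumr -!big_split /=; apply: ler_sum => i _.
rewrite /excess g_affine (addrAC (g i x)).
have := maxr0_sqrD (g i x - p) (t * (g i y - g i x)); rewrite exprMn; lra.
Qed.

Lemma penalty_argmin_variational x0 : D x0 -> (forall y, D y -> penalty x0 <= penalty y) ->
  forall y, D y -> 0 <= \sum_i excess i x0 * (g i y - g i x0).
Proof.
move=> x0D x0_min y yD; set delta := \sum_i _.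
pose H := \sum_i (g i y - g i x0) ^+ 2.
rewrite leNgt; apply/negP => delta_lt0.
have H_ge0 : 0 <= H by rewrite sumr_ge0 // => i _; exact: sqr_ge0.
(* the step size t below makes the first-order decrease dominate the quadratic term *)
pose t := - delta / (H - delta).
have Hdelta_gt0 : 0 < H - delta by rewrite subr_gt0 (lt_le_trans delta_lt0).
have t_gt0 : 0 < t by rewrite divr_gt0 // oppr_gt0.
have t_01 : 0 <= t <= 1 by rewrite ltW //= ler_pdivrMr // mul1r; lra.
have tE : t * (H - delta) = - delta by rewrite divfK // gt_eqF.
have := x0_min _ (D_convex x0D yD t_01).
have := penalty_segment x0 y t; rewrite -/delta -/H.
nra.
Qed.

Lemma minimax_weights : D !=set0 -> (forall x, D x -> exists i, p < g i x) ->
  exists w : I -> R, [/\ forall i, 0 <= w i, \sum_i w i = 1 &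
                         forall x, D x -> p <= \sum_i w i * g i x].
Proof.
move=> D_neq0 D_above.
have [x0 x0D x0_min] :=
  compact_EVT_min D_neq0 D_compact (continuous_subspaceT penalty_continuous).
rewrite inE in x0D; have {}x0_min y : D y -> penalty x0 <= penalty y.
  by move=> yD; apply: x0_min; rewrite inE.
have excess_ge0 i : 0 <= excess i x0 by rewrite le_max lexx.
set S := \sum_i excess i x0.
have S_gt0 : 0 < S.
  have [i pi] := D_above x0 x0D.
  rewrite /S (bigD1 i) //= ltr_pwDl ?sumr_ge0 //.
  by rewrite lt_max subr_gt0 pi orbT.
exists (fun i => excess i x0 / S); split.
- by move=> i; rewrite divr_ge0 // ltW.
- by rewrite -mulr_suml mulfV // gt_eqF.
move=> x xD.
have -> : \sum_i excess i x0 / S * g i x = (\sum_i excess i x0 * g i x) / S.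
  by rewrite mulr_suml; apply: eq_bigr => i _; rewrite mulrAC.
rewrite ler_pdivlMr // /S mulr_sumr.
have variational := penalty_argmin_variational x0D x0_min xD.
apply: (@le_trans _ _ (\sum_i excess i x0 * g i x0)).
  by apply: ler_sum => i _; rewrite /excess; case: (leP 0 (g i x0 - p)) => ?; nra.
by rewrite -subr_ge0 -sumrB; under eq_bigr do rewrite -mulrBr.
Qed.

End Minimax.

Section Multiplex.
Variables (R : realType) (N : nat) (e1 e2 : rel 'I_N) (c : R).
Hypotheses (N_gt0 : (0 < N)%N) (c_ge0 : 0 <= c).
Implicit Types (X : 'M[R]_(N + N)) (w : 'I_N -> R).

Definition Lmatch (i : 'I_N) : 'M[R]_(N + N) := Ledge R (lshift N i) (rshift N i).

Definition match_max X := \big[Num.max/0]_i frob X (Lmatch i).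

Definition dual_obj X := frob X (L0 R e1 e2) + c * match_max X.

Lemma frob_Linter X w : frob X (Linter w) = \sum_i w i * frob X (Lmatch i).
Proof. by rewrite linear_sum; apply: eq_bigr => i _; rewrite linearZ. Qed.

Lemma frob_Lmatch_ge0 X i : dual_domain X -> 0 <= frob X (Lmatch i).
Proof. by move=> [_ [_ [_ qX]]]; rewrite /Lmatch Ledge_outer frob_outer; exact: qX. Qed.

Lemma match_max_ge X i : frob X (Lmatch i) <= match_max X.
Proof. exact: le_bigmax. Qed.

Lemma match_max_attained X : dual_domain X -> exists i, match_max X = frob X (Lmatch i).
Proof.
move=> XD; rewrite /match_max.
have [i _ ->] := eq_bigmax (Ordinal N_gt0) xpredT _ isT (fun i _ => frob_Lmatch_ge0 i XD).
by exists i.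
Qed.

Lemma laplacian_like_L0 : laplacian_like (L0 R e1 e2).
Proof.
by apply: laplacian_likeD; apply: laplacian_like_sum => i _;
  apply: laplacian_like_sum => j _; exact: laplacian_like_Ledge.
Qed.

Lemma laplacian_like_Linter w : laplacian_like (Linter w).
Proof.
by apply: laplacian_like_sum => i _; apply: laplacian_likeZ; exact: laplacian_like_Ledge.
Qed.

Lemma primal_le_dual_obj w lam mu X :
  dual_domain X -> primal_feasible e1 e2 c w lam mu -> lam <= dual_obj X.
Proof.
move=> XD [psdP [sum_w w_ge0]]; have [X1 [Xe psdX]] := XD.
have := frob_psd_ge0 psdX psdP.
rewrite linearB 2!linearD /= -scalemx1 !frobZr X1 Xe frob_Linter.
rewrite mulr0 addr0 mulr1 subr_ge0 => /le_trans; apply.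
rewrite /dual_obj addrC lerD2l -sum_w mulr_suml; apply: ler_sum => i _.
by rewrite ler_wpM2l ?match_max_ge.
Qed.

Lemma dual_obj_le_dual_value xi X :
  dual_feasible xi X -> dual_obj X <= frob X (L0 R e1 e2) - c * xi.
Proof.
move=> [X1 [Xe [Xxi psdX]]]; rewrite /dual_obj -mulrN lerD2l ler_wpM2l //.
apply: bigmax_le => [|i _]; last exact: Xxi.
by apply: le_trans (Xxi (Ordinal N_gt0)); apply: frob_Lmatch_ge0.
Qed.

Lemma dual_feasible_match_max X : dual_domain X -> dual_feasible (- match_max X) X.
Proof.
by move=> [X1 [Xe psdX]]; do 2!split => //; split => // i; rewrite opprK match_max_ge.
Qed.

Lemma dual_domain_neq0 : exists X, dual_domain X.
Proof.
exists (2^-1 *: Ledge R (lshift N (Ordinal N_gt0)) (rshift N (Ordinal N_gt0))).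
by apply: dual_domain_Ledge; rewrite eq_lrshift.
Qed.

Lemma dual_obj_argmin :
  exists2 X, dual_domain X & forall Y, dual_domain Y -> dual_obj X <= dual_obj Y.
Proof.
apply: dual_domain_argmin.
  move=> v; apply: (@continuousD _ R^o _ (fun v => frob (vec_mx v) (L0 R e1 e2))
                                  (fun v => c * match_max (vec_mx v))).
    exact: frob_vec_mx_continuous.
  apply: (@continuousM _ _ (fun=> c)); first exact: cst_continuous.
  by apply: bigmax_continuous => i; exact: frob_vec_mx_continuous.
exact: dual_domain_neq0.
Qed.

Lemma primal_feasible_of_lower_bound w p :
  (forall i, 0 <= w i) -> \sum_i w i = c ->
  (forall X, dual_domain X -> p <= frob X (Linter w + L0 R e1 e2)) ->
  primal_feasible e1 e2 c w p `|p|.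
Proof.
move=> w_ge0 sum_w p_le; split=> //; apply: psd_laplacian_shift.
- by rewrite addn_gt0 N_gt0.
- exact: laplacian_likeD (laplacian_like_Linter _) laplacian_like_L0.
- by rewrite (le_trans (ler_norm p)) // ler_peMr // ler1n addn_gt0 N_gt0.
- exact: rayleigh_lower_bound.
Qed.

Lemma primal_feasible_below_dual_min p : (forall X, dual_domain X -> p < dual_obj X) ->
  exists w mu, primal_feasible e1 e2 c w p mu.
Proof.
move=> p_below.
pose g i (v : 'rV[R]_((N + N) * (N + N))) := frob (vec_mx v) (L0 R e1 e2 + c *: Lmatch i).
have [|||||w [w_ge0 sum_w1 w_bound]] :=
  minimax_weights (D := @vec_dual_domain R (N + N)) (g := g) (p := p)
    (@vec_dual_domain_compact R (N + N)).
- exact: vec_dual_domain_convex.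
- by move=> i v v' t; rewrite /g vec_mx_segment frob_segment.
- by move=> i; exact: frob_vec_mx_continuous.
- by have [X XD] := dual_domain_neq0; exists (mxvec X); rewrite /vec_dual_domain /= mxvecK.
- move=> v vD; have [i Mi] := match_max_attained vD; exists i.
  by rewrite /g frobDr frobZr -Mi; exact: p_below.
exists (fun i => c * w i), `|p|; apply: primal_feasible_of_lower_bound.
- by move=> i; rewrite mulr_ge0.
- by rewrite -mulr_sumr sum_w1 mulr1.
move=> X XD.
suff -> : frob X (Linter (fun i => c * w i) + L0 R e1 e2) = \sum_i w i * g i (mxvec X).
  by apply: w_bound; rewrite /vec_dual_domain /= mxvecK.
rewrite /g mxvecK frobDr frob_Linter addrC -[frob X _]mul1r -sum_w1 mulr_suml.
by rewrite -big_split; apply: eq_bigr => i _; rewrite /= frobDr frobZr; ring.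
Qed.

End Multiplex.

Theorem proposition2 (R : realType) (N : nat) (e1 e2 : rel 'I_N) (c : R) :
  (0 < N)%N -> simple_graph e1 -> simple_graph e2 -> 0 <= c ->
  exists p : R,
    (* p is the (finite) optimal value of the primal problem  max lambda2 *)
    ((forall w lam2 mu, primal_feasible e1 e2 c w lam2 mu -> lam2 <= p) /\
     (forall eps : R, 0 < eps ->
        exists w lam2 mu, primal_feasible e1 e2 c w lam2 mu /\ p - eps < lam2)) /\
    (* the dual (value of  min <X,L0> - c xi, i.e. minus the sup of c xi - <X,L0>)
       equals p and is attained *)
    (forall xi X, dual_feasible xi X -> p <= frob X (L0 R e1 e2) - c * xi) /\
    (exists xi X, dual_feasible xi X /\ frob X (L0 R e1 e2) - c * xi = p).
Proof.
(* Strong duality does not need the layers to be simple graphs. *)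
move=> N_gt0 _ _ c_ge0.
have [Xs Xs_dom Xs_min] := dual_obj_argmin e1 e2 c N_gt0.
exists (dual_obj e1 e2 c Xs); split; [split|split].
- by move=> w lam mu; exact: primal_le_dual_obj.
- move=> eps eps_gt0; pose p := dual_obj e1 e2 c Xs - eps / 2.
  have [|w [mu feas]] :=
    primal_feasible_below_dual_min (e1 := e1) (e2 := e2) N_gt0 c_ge0 (p := p).
    by move=> X XD; apply: lt_le_trans (Xs_min X XD); rewrite gtrBl divr_gt0.
  by exists w, p, mu; split => //; rewrite ltrD2l ltrN2 ltr_pdivrMr // ltr_pMr ?ltr1n.
- move=> xi X dual_X; apply: le_trans (dual_obj_le_dual_value e1 e2 N_gt0 c_ge0 dual_X).
  by apply: Xs_min; case: dual_X => [X1 [Xe [_ psdX]]].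
- exists (- match_max Xs), Xs; split; first exact: dual_feasible_match_max.
  by rewrite /dual_obj mulrN opprK.
Qed.
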